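(* Let $\mathfrak{C}$ be a chromosome-set. If there exists $K\ge 1$ such that every string of length $K$ is a conductor for $\mathfrak{C}$, then $\mathrm{CPC}(\mathrm{DBG}(\mathfrak{C},K))=\mathfrak{C}$.
   Context: All strings are over a fixed finite alphabet $\Sigma$. A cyclic string is a bi-infinite periodic word $\mathbb{Z}\to\Sigma$, considered up to shifting indices; for a nonempty finite string $x$, $\langle x\rangle$ is the cyclic string repeating $x$ in both directions. A chromosome-set is a set of cyclic strings; a finite string is a substring of it if it is a contiguous block of one of its elements. A finite string $v$ is a conductor for $\mathfrak{C}$ if for all nonempty finite strings $a,b$ such that $va$ and $vb$ both end with $v$, we have $\langle ab\rangle\in\mathfrak{C}$ if and only if $\langle a\rangle\in\mathfrak{C}$ and $\langle b\rangle\in\mathfrak{C}$. $\mathrm{DBG}(\mathfrak{C},K)$ is the de Bruijn graph: its vertices are the strings of length $K$ that are substrings of $\mathfrak{C}$ (labelled by themselves), and for each string $w$ of length $K+1$ that is a substring of $\mathfrak{C}$ there is an edge labelled $w$ from the vertex equal to its length-$K$ prefix to the vertex equal to its length-$K$ suffix. The label of a walk $v_0,e_1,\dots,e_n,v_n$ is $Label(e_1)$ followed, for $i\ge 2$, by $Label(e_i)$ with its first $|Label(v_{i-1})|$ characters removed. A circuit is a primitive closed walk up to rotation; if its walk label is $Label(v_0)x$, its label is $\langle x\rangle$. $\mathrm{CPC}(\mathfrak{G})$ is the set of circuit labels of a graph $\mathfrak{G}$. *)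

From mathcomp Require Import all_boot all_order all_algebra.
Set Implicit Arguments. Unset Strict Implicit. Unset Printing Implicit Defensive.
Import GRing.Theory Num.Theory.

Section Defs.
Variable Sigma : finType.

Definition bword := int -> Sigma.

Definition periodic (w : bword) : Prop :=
  exists p : nat, (0 < p)%N /\ forall i : int, w (i + p%:Z)%R = w i.

Definition shift_eq (w w' : bword) : Prop :=
  exists k : int, forall i : int, w' i = w (i + k)%R.

(* A chromosome-set (set of cyclic strings) is encoded as a predicate on
   bi-infinite words whose elements are periodic and which is closed under
   shifting (a union of shift classes). *)
Definition chromosome_set (C : bword -> Prop) : Prop :=
  (forall w, C w -> periodic w) /\
  (forall w w', shift_eq w w' -> C w -> C w').

(* [represents x w] : x is nonempty and w is (a shift of) <x> *)
Definition represents (x : seq Sigma) (w : bword) : Prop :=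
  (0 < size x)%N /\
  exists k : int, forall i : int,
    onth x (absz (((i + k)%R %% (size x)%:Z)%Z)) = Some (w i).

Definition cmem (C : bword -> Prop) (x : seq Sigma) : Prop :=
  exists w, C w /\ represents x w.

Definition substr (C : bword -> Prop) (s : seq Sigma) : Prop :=
  exists w, C w /\ exists i : int,
    forall j : nat, (j < size s)%N -> onth s j = Some (w (i + j%:Z)%R).

Definition conductor (C : bword -> Prop) (v : seq Sigma) : Prop :=
  forall a b : seq Sigma, (0 < size a)%N -> (0 < size b)%N ->
    suffix v (v ++ a) -> suffix v (v ++ b) ->
    (cmem C (a ++ b) <-> cmem C a /\ cmem C b).

(* labelled directed multigraphs: vertices/edges are the elements of types
   gV/gE satisfying isV/isE *)
Record lgraph := LGraph {
  gV : Type; gE : Type;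
  isV : gV -> Prop; isE : gE -> Prop;
  src : gE -> gV; tgt : gE -> gV;
  vlab : gV -> seq Sigma; elab : gE -> seq Sigma }.

Fixpoint walk_from (G : lgraph) (v : gV G) (es : seq (gE G)) : Prop :=
  match es with
  | [::] => True
  | e :: es' => isE e /\ src e = v /\ isV (tgt e) /\ walk_from (tgt e) es'
  end.

Definition walk (G : lgraph) (v0 : gV G) (es : seq (gE G)) : Prop :=
  isV v0 /\ walk_from v0 es.

Definition walk_label (G : lgraph) (v0 : gV G) (es : seq (gE G)) : seq Sigma :=
  match es with
  | [::] => vlab v0
  | e :: es' => elab e ++
      flatten [seq drop (size (vlab (src e'))) (elab e') | e' <- es']
  end.

Definition closed_walk (G : lgraph) (v0 : gV G) (es : seq (gE G)) : Prop :=
  walk v0 es /\ (0 < size es)%N /\ last v0 (map (@tgt G) es) = v0.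

Definition primitive_walk (G : lgraph) (es : seq (gE G)) : Prop :=
  ~ exists (es' : seq (gE G)) (k : nat), (1 < k)%N /\ es = flatten (nseq k es').

(* CPC(G): circuit labels, as a (shift-closed) predicate on bi-infinite words *)
Definition CPC (G : lgraph) (w : bword) : Prop :=
  exists (v0 : gV G) (es : seq (gE G)) (x : seq Sigma),
    closed_walk v0 es /\ primitive_walk es /\
    walk_label v0 es = vlab v0 ++ x /\ represents x w.

Definition DBG (C : bword -> Prop) (K : nat) : lgraph :=
  {| gV := seq Sigma; gE := seq Sigma;
     isV := fun s => size s = K /\ substr C s;
     isE := fun w => size w = K.+1 /\ substr C w;
     src := fun w => take K w; tgt := fun w => drop 1 w;
     vlab := id; elab := id |}.

End Defs.

From mathcomp Require Import all_boot all_order all_algebra.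
From Stdlib Require Import Classical.
Import GRing.Theory Num.Theory.
Set Implicit Arguments. Unset Strict Implicit.

(* A closed walk of DBG(C, K) from the vertex v reading x is one along which v x
   ends with v again.  Each edge v c is a substring of some w in C, and a full
   period of w starting at that c gives a loop c u at v with <c u> in C.  Going
   along the walk, the conductor property at each visited vertex glues these
   edge loops together (after rotations), which yields r with <x r> in C and
   v x r ending with v; the conductor property at v then splits off <x>.
   Conversely, a word of C of minimal period p is read by the closed walk
   through its p consecutive (K+1)-windows, and this walk is primitive because
   a repetition of it would exhibit a shorter period. *)

Section Seq.
Variable T : Type.
Implicit Types v a b : seq T.

Lemma drop_cat_leq n (s1 s2 : seq T) :
  (n <= size s1)%N -> drop n (s1 ++ s2) = drop n s1 ++ s2.
Proof.
rewrite leq_eqVlt => /orP[/eqP-> | lt]; last by rewrite drop_cat lt.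
by rewrite drop_size drop_size_cat.
Qed.

(* The vertex of a de Bruijn graph reached from [v] by reading [a]. *)
Definition slide v a := drop (size a) (v ++ a).

Lemma size_slide v a : size (slide v a) = size v.
Proof. by rewrite /slide size_drop size_cat addnK. Qed.

Lemma slide_cat v a b : slide v (a ++ b) = slide (slide v a) b.
Proof.
rewrite /slide -drop_cat_leq ?size_cat ?leq_addl // drop_drop catA.
by rewrite addnC.
Qed.

Lemma size_flatten_nseq k (s : seq T) : size (flatten (nseq k s)) = (k * size s)%N.
Proof. by rewrite size_flatten /shape map_nseq sumn_nseq mulnC. Qed.

End Seq.

Lemma suffix_slide (T : eqType) (v a : seq T) : suffix v (v ++ a) = (slide v a == v).
Proof. by rewrite suffixE size_cat addKn. Qed.

Section Words.
Variable Sigma : finType.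
Implicit Types (w : bword Sigma) (C : bword Sigma -> Prop) (x y : seq Sigma).
Local Open Scope ring_scope.

Definition periodic_by w (p : nat) := forall i, w (i + p%:Z) = w i.

Lemma periodic_byZ w p : periodic_by w p -> forall (m : int) i, w (i + m * p%:Z) = w i.
Proof.
move=> wp; have nat_case (n : nat) i : w (i + n%:Z * p%:Z) = w i.
  elim: n i => [|n IH] i; first by rewrite mul0r addr0.
  by rewrite -[n.+1]addn1 PoszD mulrDl mul1r addrA wp IH.
case=> [n|n] i; first exact: nat_case.
by rewrite -(nat_case n.+1 (i + Negz n * p%:Z)) NegzE mulNr -addrA addNr addr0.
Qed.

Lemma periodic_by_modz w p a i : periodic_by w p -> w (a + ((i - a) %% p%:Z)%Z) = w i.
Proof.
move=> wp; rewrite -(periodic_byZ wp ((i - a) %/ p%:Z)%Z) -addrA.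
by rewrite [X in a + X]addrC -divz_eq addrC subrK.
Qed.

Lemma modz_natP (m : int) (p : nat) : (0 < p)%N ->
  exists2 j : nat, (j < p)%N & (m %% p%:Z)%Z = j%:Z.
Proof.
move=> p0; have := ltz_pmod m (p0 : 0 < p%:Z).
have := modz_ge0 m (lt0r_neq0 (p0 : 0 < p%:Z)).
by case: (m %% p%:Z)%Z => // j _ ltjp; exists j.
Qed.

Definition window w (a : int) (n : nat) := mkseq (fun j => w (a + j%:Z)) n.

Lemma size_window w a n : size (window w a n) = n.
Proof. exact: size_mkseq. Qed.

Lemma nth_window w a n d j : (j < n)%N -> nth d (window w a n) j = w (a + j%:Z).
Proof. exact: nth_mkseq. Qed.

Lemma onth_window w a n j : (j < n)%N -> onth (window w a n) j = Some (w (a + j%:Z)).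
Proof.
move=> ltjn; rewrite onthE (nth_map (w a)) ?size_window // nth_window //.
Qed.

Lemma windowS w a n : window w a n.+1 = rcons (window w a n) (w (a + n%:Z)).
Proof. exact: mkseqS. Qed.

Lemma window1 w a : window w a 1 = [:: w a].
Proof. by rewrite /window /mkseq /= addr0. Qed.

Lemma window_add w a m n : window w a (m + n) = window w a m ++ window w (a + m%:Z) n.
Proof.
elim: n => [|n IH]; first by rewrite addn0 cats0.
by rewrite addnS !windowS IH rcons_cat PoszD addrA.
Qed.

Lemma window_cons w a n : window w a n.+1 = w a :: window w (a + 1) n.
Proof. by rewrite -add1n window_add window1. Qed.

Lemma cat_eq_window w a m n x y : size x = m ->
  x ++ y = window w a (m + n) -> x = window w a m /\ y = window w (a + m%:Z) n.
Proof.
move=> sx; rewrite window_add => /eqP; rewrite eqseq_cat ?size_window //.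
by case/andP=> /eqP-> /eqP->.
Qed.

Lemma window_periodic w p a n : periodic_by w p -> window w (a + p%:Z) n = window w a n.
Proof. by move=> wp; apply: eq_mkseq => j; rewrite addrAC wp. Qed.

Lemma slide_window w a m n :
  slide (window w a m) (window w (a + m%:Z) n) = window w (a + n%:Z) m.
Proof.
by rewrite /slide -window_add size_window addnC window_add drop_size_cat ?size_window.
Qed.

Lemma periodic_by_window_shift w p q a : periodic_by w p -> (0 < p)%N ->
  window w (a + q%:Z) p = window w a p -> periodic_by w q.
Proof.
move=> wp p0 E i; have [j ltjp Ej] := modz_natP (i - a) p0.
have := congr1 (nth (w a) ^~ j) E; rewrite !nth_window // => Ewj.
rewrite -(periodic_by_modz (a + q%:Z) (i + q%:Z) wp) -(periodic_by_modz a i wp).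
have -> : i + q%:Z - (a + q%:Z) = i - a by rewrite opprD addrACA subrr addr0.
by rewrite Ej.
Qed.

Lemma periodic_by_power w p a k y : periodic_by w p -> (0 < k)%N ->
  window w a p = flatten (nseq k y) -> periodic_by w (size y).
Proof.
move=> wp; case: k => // k _ E; set q := size y.
have sp : p = (q + k * q)%N.
  by rewrite -(size_window w a p) E size_flatten_nseq.
have [p0 | q0] := posnP q; first by move=> i; rewrite p0 addr0.
have [Ey Ek] := cat_eq_window (erefl q) (etrans (esym E) (congr1 _ sp)).
apply: (periodic_by_window_shift wp _ (a := a)); first by rewrite sp addn_gt0 q0.
rewrite E {1}sp addnC window_add -Ek -addrA -PoszD -sp window_periodic // -Ey.
by rewrite -flatten_rcons -cats1 -[[:: y]]/(nseq 1 y) -nseqD addn1.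
Qed.

Lemma exists_min_period w : periodic w ->
  exists p, [/\ (0 < p)%N, periodic_by w p & forall q, (0 < q < p)%N -> ~ periodic_by w q].
Proof.
case=> p0 [p00 wp0]; elim/ltn_ind: p0 p00 wp0 => p IH p0 wp.
have [[q [/andP[q0 ltqp] wq]] | nomin] :=
  classic (exists q, (0 < q < p)%N /\ periodic_by w q).
  exact: IH q ltqp q0 wq.
by exists p; split=> // q ltq wq; apply: nomin; exists q.
Qed.

Lemma representsP x w : represents x w <->
  [/\ (0 < size x)%N, periodic_by w (size x) & exists a, x = window w a (size x)].
Proof.
split=> [[x0 [k H]] | [x0 wx [a Ex]]].
  split=> //.
    move=> i; have := H (i + (size x)%:Z); rewrite addrAC modzDr H.
    by case.
  exists (- k); apply: eq_from_onth_le => j; rewrite size_window maxnn => ltj.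
  by rewrite onth_window // -H addrAC addNr add0r modz_nat /= modn_small.
split=> //; exists (- a) => i; have [j ltj Ej] := modz_natP (i - a) x0.
by rewrite Ej /= {1}Ex onth_window // -Ej periodic_by_modz.
Qed.

Lemma represents_shift_eq x w w' : represents x w -> represents x w' -> shift_eq w' w.
Proof.
move=> [_ [k H]] [_ [k' H']]; exists (k - k') => i.
have := H' (i + (k - k')); rewrite -addrA subrK H.
by case.
Qed.

Lemma cmem_size_gt0 C x : cmem C x -> (0 < size x)%N.
Proof. by case=> w [_ []]. Qed.

Lemma cmem_catC C x y : cmem C (x ++ y) -> cmem C (y ++ x).
Proof.
case=> w [Cw /representsP[xy0 wxy [a E]]]; exists w; split=> //.
have syx : size (y ++ x) = size (x ++ y) by rewrite !size_cat addnC.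
apply/representsP; rewrite syx; split=> //; exists (a + (size x)%:Z).
move: E; rewrite size_cat => /(cat_eq_window (erefl _)) [Ex Ey].
rewrite addnC window_add -addrA -PoszD -size_cat (window_periodic _ _ wxy).
by rewrite -Ex -Ey.
Qed.

Lemma substrP C s : substr C s <-> exists2 w, C w & exists a, s = window w a (size s).
Proof.
split=> [[w [Cw [a H]]] | [w Cw [a E]]]; exists w => //.
  exists a; apply: eq_from_onth_le => j; rewrite size_window maxnn => ltj.
  by rewrite H // onth_window.
by split=> //; exists a => j ltj; rewrite {1}E onth_window.
Qed.

Lemma substr_window C w a n : C w -> substr C (window w a n).
Proof. by move=> Cw; apply/substrP; exists w => //; exists a; rewrite size_window. Qed.

End Words.

Section Conductor.
Variables (Sigma : finType) (C : bword Sigma -> Prop) (v : seq Sigma).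
Hypothesis v_conductor : conductor C v.

Lemma conductor_cat x y : slide v x = v -> slide v y = v ->
  cmem C x -> cmem C y -> cmem C (x ++ y).
Proof.
move=> vx vy Cx Cy.
have := v_conductor (cmem_size_gt0 Cx) (cmem_size_gt0 Cy).
by rewrite !suffix_slide vx vy eqxx => /(_ isT isT) [_]; apply.
Qed.

Lemma conductor_catl x y : (0 < size x)%N -> (0 < size y)%N ->
  slide v x = v -> slide v y = v -> cmem C (x ++ y) -> cmem C x.
Proof.
move=> x0 y0 vx vy.
have := v_conductor x0 y0; rewrite !suffix_slide vx vy eqxx => /(_ isT isT) [Cxy _].
by case/Cxy.
Qed.

End Conductor.

Section DeBruijn.
Variables (Sigma : finType) (C : bword Sigma -> Prop) (K : nat).
Implicit Types (w : bword Sigma) (v : seq Sigma) (es : seq (seq Sigma)).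
Hypothesis C_periodic : forall w, C w -> periodic w.

Local Open Scope ring_scope.
Local Notation dbg_walk := (walk_from (G := DBG C K)).

Definition walk_letters es := flatten [seq drop K e | e <- es].

Lemma walk_letters_flatten_nseq k es :
  walk_letters (flatten (nseq k es)) = flatten (nseq k (walk_letters es)).
Proof. by elim: k => //= k IH; rewrite -IH /walk_letters map_cat flatten_cat. Qed.

Lemma dbg_walk_consE v e es : dbg_walk v (e :: es) <->
  [/\ size e = K.+1, substr C e, take K e = v, substr C (drop 1 e)
    & dbg_walk (drop 1 e) es].
Proof.
split=> [[[? ?] [? [[_ ?] ?]]] | [se ? ? ? ?]]; first by [].
by do !split=> //; rewrite /= size_drop se subn1.
Qed.

Lemma dbg_walk_cons v e es : size v = K ->
  dbg_walk v (e :: es) <->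
  exists c, [/\ e = rcons v c, substr C (rcons v c), substr C (slide v [:: c])
              & dbg_walk (slide v [:: c]) es].
Proof.
have slide1 c : slide v [:: c] = drop 1 (rcons v c) by rewrite /slide cats1.
move=> sv; rewrite dbg_walk_consE; split=> [[] | [c [-> vc vc' walk_es]]].
  case/lastP: e => // v' c; rewrite size_rcons => -[sv'] vc.
  rewrite -cats1 take_size_cat // cats1 => Ev; subst v'.
  by exists c; rewrite slide1.
by split; rewrite ?size_rcons ?sv // -?slide1 // -cats1 take_size_cat.
Qed.

Lemma dbg_walk_edge_size v es : dbg_walk v es -> {in es, forall e, size e = K.+1}.
Proof.
elim: es v => [|e es IH] v //= [[se _] [_ [_ walk_es]]] e'.
by rewrite in_cons => /orP[/eqP-> // | /(IH _ walk_es)].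
Qed.

Lemma dbg_walk_letters_cons v c es :
  size v = K -> walk_letters (rcons v c :: es) = c :: walk_letters es.
Proof. by move=> sv; rewrite /walk_letters /= -cats1 drop_size_cat. Qed.

Lemma dbg_walk_label v es : size v = K -> dbg_walk v es ->
  walk_label (G := DBG C K) v es = v ++ walk_letters es.
Proof.
case: es => [|e es] sv; first by rewrite cats0.
move=> walk_ees; have esize := dbg_walk_edge_size walk_ees.
move/(dbg_walk_cons _ _ sv): walk_ees => [c [Ee _ _ _]].
rewrite Ee dbg_walk_letters_cons // -cat_rcons /=; congr (_ ++ flatten _).
by apply/eq_in_map=> e' ine'; rewrite size_takel // esize // in_cons ine' orbT.
Qed.

Lemma dbg_walk_slide v es : size v = K -> dbg_walk v es ->
  slide v (walk_letters es) = last v [seq drop 1 e | e <- es].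
Proof.
elim: es v => [|e es IH] v sv; first by rewrite /slide drop0 cats0.
move/(dbg_walk_cons _ _ sv) => [c [-> _ _ walk_es]].
rewrite dbg_walk_letters_cons // -cat1s slide_cat IH ?size_slide //=.
by rewrite /slide cats1.
Qed.

Lemma substr_rcons_loop v c : substr C (rcons v c) ->
  exists u, cmem C (c :: u) /\ slide v (c :: u) = v.
Proof.
case/substrP=> w Cw [a]; rewrite size_rcons windowS => /eqP.
rewrite eqseq_rcons => /andP[/eqP Ev /eqP ->].
have [p [p0 wp]] := C_periodic Cw; case: p p0 wp => // p _ wp.
exists (window w (a + (size v)%:Z + 1) p); rewrite -window_cons; split.
  exists w; split=> //; apply/representsP; rewrite size_window.
  by split=> //; exists (a + (size v)%:Z).
by rewrite {1}Ev slide_window (window_periodic _ _ wp) -Ev.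
Qed.

Hypothesis C_conductors : forall v, size v = K -> conductor C v.

Lemma dbg_walk_loop v es : size v = K -> dbg_walk v es -> es != [::] ->
  exists r, cmem C (walk_letters es ++ r) /\ slide v (walk_letters es ++ r) = v.
Proof.
elim: es v => [//|e es IH] v sv /(dbg_walk_cons _ _ sv) [c [-> vc _ walk_es]] _.
rewrite dbg_walk_letters_cons //.
have [u [Ccu vcu]] := substr_rcons_loop vc.
case: es IH walk_es => [_ _ | e' es IH walk_es]; first by exists u.
set v' := slide v [:: c].
have sv' : size v' = K by rewrite size_slide.
have [r [Cyr v'yr]] := IH v' sv' walk_es isT.
set y := walk_letters (e' :: es) in Cyr v'yr *.
have v'uc : slide v' (u ++ [:: c]) = v'.
  by rewrite /v' -slide_cat -[[:: c] ++ _]/((c :: u) ++ [:: c]) slide_cat vcu.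
have Cuc : cmem C (u ++ [:: c]) by apply: cmem_catC.
have := conductor_cat (C_conductors sv') v'yr v'uc Cyr Cuc.
rewrite catA => /cmem_catC /= Ccyru; exists (r ++ u); rewrite catA.
split=> //; rewrite -cat1s slide_cat slide_cat -/v' v'yr.
by rewrite /v' -slide_cat cat1s.
Qed.

Hypothesis C_shift : forall w w', shift_eq w w' -> C w -> C w'.

Lemma CPC_DBG_subset w : CPC (DBG C K) w -> C w.
Proof.
case=> v0 [es [x [[[[sv0 _] walk_es] [es0 closed]] [_ [label rep]]]]].
have Ex : x = walk_letters es.
  by move: label; rewrite dbg_walk_label // => /eqP; rewrite eqseq_cat // eqxx => /eqP.
have v0x : slide v0 x = v0 by rewrite Ex dbg_walk_slide.
have nes : es != [::] by rewrite -size_eq0 -lt0n.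
have [r [Cxr v0xr]] := dbg_walk_loop sv0 walk_es nes; rewrite -Ex in Cxr v0xr.
have Cx : cmem C x.
  case: r Cxr v0xr => [|b r]; first by rewrite cats0.
  rewrite slide_cat v0x => Cxr v0br.
  by apply: (conductor_catl (C_conductors sv0) _ _ v0x v0br Cxr); case: rep.
case: Cx => w' [Cw' rep']; exact: C_shift (represents_shift_eq rep rep') Cw'.
Qed.

Fixpoint window_edges w (a : int) (m : nat) : seq (seq Sigma) :=
  if m is m'.+1 then window w a K.+1 :: window_edges w (a + 1) m' else [::].

Lemma size_window_edges w a m : size (window_edges w a m) = m.
Proof. by elim: m a => //= m IH a; rewrite IH. Qed.

Lemma dbg_walk_window_edges w a m : C w -> dbg_walk (window w a K) (window_edges w a m).
Proof.
move=> Cw; elim: m a => [|m IH] a; first by [].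
apply/dbg_walk_cons; first exact: size_window.
have slideE : slide (window w a K) [:: w (a + K%:Z)] = window w (a + 1) K.
  by rewrite -window1 slide_window.
exists (w (a + K%:Z)); rewrite -windowS slideE.
by split=> //; apply: substr_window.
Qed.

Lemma walk_letters_window_edges w a m :
  walk_letters (window_edges w a m) = window w (a + K%:Z) m.
Proof.
elim: m a => [|m IH] a //=.
rewrite [window w a K.+1]windowS dbg_walk_letters_cons ?size_window // IH.
by rewrite window_cons addrAC.
Qed.

Lemma primitive_window_edges w p a : periodic_by w p -> (0 < p)%N ->
  (forall q, (0 < q < p)%N -> ~ periodic_by w q) ->
  primitive_walk (G := DBG C K) (window_edges w a p).
Proof.
move=> wp p0 pmin [es [k [k1 E]]].
have := congr1 walk_letters E.
rewrite walk_letters_window_edges walk_letters_flatten_nseq => Ey.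
have sp : p = (k * size (walk_letters es))%N.
  by rewrite -(size_window w (a + K%:Z) p) Ey size_flatten_nseq.
apply: (pmin (size (walk_letters es))); last exact: periodic_by_power wp (ltnW k1) Ey.
by move: p0; rewrite sp muln_gt0 => /andP[_ y0]; rewrite y0 ltn_Pmull.
Qed.

Lemma subset_CPC_DBG w : C w -> CPC (DBG C K) w.
Proof.
move=> Cw; have [p [p0 wp pmin]] := exists_min_period (C_periodic Cw).
set a := - K%:Z; set v0 := window w a K.
have walk_es := dbg_walk_window_edges a p Cw.
have sv0 : size v0 = K := size_window _ _ _.
have letters_es := walk_letters_window_edges w a p; rewrite addNr in letters_es.
exists v0, (window_edges w a p), (window w 0 p).
split; [split; [split | split] | split; [| split]].
- by split; last exact: substr_window.
- exact: walk_es.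
- by rewrite size_window_edges.
- rewrite -dbg_walk_slide // letters_es -(addNr K%:Z) -/a /v0 slide_window.
  exact: window_periodic.
- exact: primitive_window_edges.
- by rewrite dbg_walk_label // letters_es.
- by apply/representsP; rewrite size_window; split=> //; exists 0.
Qed.

End DeBruijn.

Theorem theorem6 (Sigma : finType) (C : bword Sigma -> Prop) (K : nat) :
  chromosome_set C ->
  (1 <= K)%N ->
  (forall v : seq Sigma, size v = K -> conductor C v) ->
  forall w : bword Sigma, CPC (DBG C K) w <-> C w.
Proof.
(* The argument works for K = 0 as well. *)
move=> [C_periodic C_shift] _ C_conductors w; split.
- exact: CPC_DBG_subset.
- exact: subset_CPC_DBG.
Qed.
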